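(* Let $\mathcal{S}$ be the smooth projective surface over $\mathbb{Q}$ given by the affine equations \[ (x^2+1)y^2 = (x^2+2)z^2 = 3(t^4 - 54t^2 - 117t - 243). \] Then $\mathcal{S}$ possesses a $\mathbb{Q}$-rational $0$-cycle of degree $1$.
   Context: $\mathcal{S}$ is Skorobogatov's bielliptic surface: it is the quotient of $\mathcal{C}\times\mathcal{D}$ by the diagonal action of $\mu_2=\{\pm1\}$, where $\mathcal{C}$ is the smooth projective genus one curve over $\mathbb{Q}$ with affine model $U^2 = 3(T^4-54T^2-117T-243)$, $\mathcal{D}$ is the smooth projective genus one curve over $\mathbb{Q}$ with affine model $Y^2 = X^2+1,\ Z^2 = X^2+2$, and $\mu_2$ acts by $(T,U)\mapsto (T,-U)$ on $\mathcal{C}$ and by $(X,Y,Z)\mapsto(X,-Y,-Z)$ on $\mathcal{D}$. The quotient map is given by $x=X$, $t=T$, $y=UY$, $z=UZ$. *)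

From HB Require Import structures.
From mathcomp Require Import all_boot all_order all_algebra all_field.
Set Implicit Arguments. Unset Strict Implicit. Unset Printing Implicit Defensive.
Import Order.TTheory GRing.Theory Num.Theory.
Local Open Scope ring_scope.

Definition quarticS (R : comNzRingType) (t : R) : R :=
  3 * (t ^+ 4 - 54 * t ^+ 2 - 117 * t - 243).

(* A point (x, y, z, t) over a field L of the affine model
     (x^2+1) y^2 = (x^2+2) z^2 = 3(t^4 - 54t^2 - 117t - 243),
   restricted to the dense open subset where the right-hand side is nonzero.
   This open subset is isomorphic to a dense open subscheme of the smooth
   projective surface S (the locus where mu_2 acts freely on C x D with
   U Y Z <> 0). *)
Definition onS0 (L : fieldType) (x y z t : L) : Prop :=
  [/\ (x ^+ 2 + 1) * y ^+ 2 = quarticS t,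
      (x ^+ 2 + 2) * z ^+ 2 = quarticS t
    & quarticS t != 0].

(* Degree over Q of the closed point underlying an L-point (x,y,z,t):
   the degree [Q(x,y,z,t) : Q] of its residue field. *)
Definition cpdeg (L : fieldExtType rat) (x y z t : L) : nat :=
  \dim <<1%VS & [:: x; y; z; t]>>%VS.

From HB Require Import structures.
From mathcomp Require Import all_boot all_order all_algebra all_field.
From mathcomp Require Import ring zify.
From Stdlib Require Import Classical_Prop.
Set Implicit Arguments. Unset Strict Implicit. Unset Printing Implicit Defensive.
Import Order.TTheory GRing.Theory Num.Theory.
Local Open Scope ring_scope.

(* A closed point of odd degree and one of degree dividing 2 suffice, since
   their degrees are coprime.  The first lies over the roots of the cubic
   g^3 + 15 g^2 + 24 g + 19 (with t = 3g), the second is (31/4, w, 4, -7) with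
   977 w^2 = 15888; checking them amounts to polynomial identities modulo the
   defining equation.  The residue fields are obtained by adjoining a root of
   an irreducible factor, chosen of odd degree in the cubic case. *)

Section IrreducibleFactor.

Variables (F : fieldType) (P : pred nat).
Hypothesis P_split : forall a b, P (a + b)%N -> P a || P b.

Lemma irreducible_factor_deg (p : {poly F}) :
  (1 < size p)%N -> P (size p).-1 ->
  exists f : {poly F}, [/\ irreducible_poly f, f %| p & P (size f).-1].
Proof.
have [n] := ubnP (size p); elim: n p => // n IHn p lt_p_n p_gt1 Pp.
have [p_irr | p_red] := classic (irreducible_poly p); first by exists p.
have [q [q_neq1 q_p q_np]] : exists q : {poly F}, [/\ size q != 1%N, q %| p & ~~ (q %= p)].
  apply: NNPP => no_q; apply: p_red; split=> // q q_neq1 q_p.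
  by apply: contraT => q_np; exfalso; apply: no_q; exists q.
have p_neq0 : p != 0 by rewrite -size_poly_gt0 ltnW.
have q_neq0 : q != 0 by apply: contraNneq p_neq0 => q0; rewrite -(dvd0p p) -q0.
have /dvdpP[r p_eq] := q_p.
have r_neq0 : r != 0 by apply: contraNneq p_neq0 => r0; rewrite p_eq r0 mul0r.
have size_p : size p = (size r + size q).-1 by rewrite {1}p_eq size_mul.
have q_gt1 : (1 < size q)%N by rewrite ltn_neqAle eq_sym q_neq1 size_poly_gt0.
have r_gt1 : (1 < size r)%N.
  rewrite ltn_neqAle size_poly_gt0 r_neq0 andbT.
  by apply: contraNneq q_np => r1; rewrite -(dvdp_size_eqp q_p) size_p -r1.
have /P_split/orP[Pr | Pq] : P ((size r).-1 + (size q).-1)%N.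
  by rewrite (_ : _ + _ = (size p).-1)%N //; lia.
- have [|f [f_irr f_r Pf]] := IHn r _ r_gt1 Pr; first lia.
  by exists f; rewrite p_eq dvdp_mulr.
- have [|f [f_irr f_q Pf]] := IHn q _ q_gt1 Pq; first lia.
  by exists f; rewrite p_eq dvdp_mull.
Qed.

Lemma ext_root_deg (p : {poly F}) :
  (1 < size p)%N -> P (size p).-1 ->
  exists (L : fieldExtType F) (z : L),
    root (map_poly (in_alg L) p) z /\ P (\dim {:L}).
Proof.
move=> p_gt1 Pp; have [f [f_irr f_p Pf]] := irreducible_factor_deg p_gt1 Pp.
have [L dimL [z z_root _]] := irredp_FAdjoin f_irr.
by exists L, z; split; [apply: root_dvdp z_root; rewrite dvdp_map | rewrite dimL].
Qed.

End IrreducibleFactor.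

Lemma pcharf0_natrS_neq0 (R : idomainType) (n : nat) :
  [pchar R] =i pred0 -> n.+1%:R != 0 :> R.
Proof. by move=> R_char0; rewrite (pcharf0P R).1. Qed.

Lemma pchar_fieldExt_rat (L : fieldExtType rat) : [pchar L] =i pred0.
Proof. by move=> p; rewrite pchar_lalg pchar_num. Qed.

Lemma cpdeg_dvdn_dim (L : fieldExtType rat) (x y z t : L) :
  (cpdeg x y z t %| \dim {:L})%N.
Proof. exact: field_dimS (subvf _). Qed.

Section CubicPoint.

Variables (L : fieldType) (g : L).
Hypothesis L_char0 : [pchar L] =i pred0.
Hypothesis g_root : g ^+ 3 + 15 * g ^+ 2 + 24 * g + 19 = 0.

Let natrS_neq0 n : n.+1%:R != 0 :> L := pcharf0_natrS_neq0 n L_char0.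

Definition cubic_x := - (g ^+ 2 + 14 * g + 10) / 9.
Definition cubic_y := 9 * (12 * g ^+ 2 + 49 * g + 31) / 5.
Definition cubic_z := 9 * (4 + 3 * g - g ^+ 2).
Definition cubic_t := 3 * g.

Lemma eq_mod_cubic (a b c : L) :
  a - b = (g ^+ 3 + 15 * g ^+ 2 + 24 * g + 19) * c -> a = b.
Proof. by rewrite g_root mul0r => /eqP; rewrite subr_eq0 => /eqP. Qed.

Lemma neq0_mod_cubic (a b c : L) (n : nat) :
  a * b = (g ^+ 3 + 15 * g ^+ 2 + 24 * g + 19) * c + n%:R -> (0 < n)%N -> a != 0.
Proof.
rewrite g_root mul0r add0r => ab_n; case: n ab_n => // n ab_n _.
by apply: contra_neq (natrS_neq0 n) => a0; rewrite -ab_n a0 mul0r.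
Qed.

Lemma cubic_x_sqr : cubic_x ^+ 2 = - (g ^+ 2 + 17 * g + 49) / 27.
Proof.
by apply: (@eq_mod_cubic _ _ ((g + 13) / 81)); rewrite /cubic_x; field;
  rewrite ?natrS_neq0.
Qed.

Lemma cubic_yz : (cubic_x ^+ 2 + 1) * cubic_y ^+ 2 = (cubic_x ^+ 2 + 2) * cubic_z ^+ 2.
Proof.
rewrite cubic_x_sqr.
apply: (@eq_mod_cubic _ _ (-3 * (119 * g ^+ 3 + 1564 * g ^+ 2 + 2639 * g + 1218) / 25)).
by rewrite /cubic_y /cubic_z; field; rewrite ?natrS_neq0.
Qed.

Lemma cubic_zt : (cubic_x ^+ 2 + 2) * cubic_z ^+ 2 = quarticS cubic_t.
Proof.
rewrite cubic_x_sqr.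
apply: (@eq_mod_cubic _ _ (-3 * (g ^+ 3 - 4 * g ^+ 2 + 11 * g - 17))).
by rewrite /cubic_z /cubic_t /quarticS; field; rewrite ?natrS_neq0.
Qed.

Lemma cubic_x_sqrD2_neq0 : cubic_x ^+ 2 + 2 != 0.
Proof.
apply: (@neq0_mod_cubic _ (27 * (7 * g ^+ 2 + 104 * g + 205)) (- (7 * g + 118)) 3267) => //.
by rewrite cubic_x_sqr; field; rewrite ?natrS_neq0.
Qed.

Lemma cubic_z_neq0 : cubic_z != 0.
Proof.
apply: (@neq0_mod_cubic _ (- (82 * g ^+ 2 + 1139 * g + 658) / 9) (82 * g - 337) 3771) => //.
by rewrite /cubic_z; field; rewrite ?natrS_neq0.
Qed.

Lemma cubic_point_onS0 : onS0 cubic_x cubic_y cubic_z cubic_t.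
Proof.
split; rewrite -?cubic_zt ?cubic_yz //.
by rewrite mulf_neq0 ?expf_neq0 ?cubic_x_sqrD2_neq0 ?cubic_z_neq0.
Qed.

End CubicPoint.

Section QuadraticPoint.

Variables (L : fieldType) (w : L).
Hypothesis L_char0 : [pchar L] =i pred0.
Hypothesis w_root : 977 * w ^+ 2 = 15888.

Let natrS_neq0 n : n.+1%:R != 0 :> L := pcharf0_natrS_neq0 n L_char0.

Lemma quadratic_point_onS0 : onS0 (31 / 4) w 4 (- 7).
Proof.
have quarticS_m7 : quarticS (- 7 : L) = 993 by rewrite /quarticS; ring.
rewrite /onS0 quarticS_m7; split; last exact: natrS_neq0.
- transitivity (977 * w ^+ 2 / 16); first by field; rewrite ?natrS_neq0.
  by rewrite w_root; field; rewrite ?natrS_neq0.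
- by field; rewrite ?natrS_neq0.
Qed.

End QuadraticPoint.

Definition cubicQ : {poly rat} := Poly [:: 19; 24; 15; 1].
Definition quadraticQ : {poly rat} := 'X^2 *+ 977 - 15888%:R.

Lemma size_cubicQ : size cubicQ = 4%N.
Proof. by rewrite (PolyK (c := 0)) ?oner_eq0. Qed.

Lemma size_quadraticQ : size quadraticQ = 3%N.
Proof.
rewrite /quadraticQ -[_ *+ 977]scaler_nat size_polyDl size_scale ?size_polyXn ?pnatr_eq0 //.
by rewrite size_polyN -polyC_natr size_polyC (leq_ltn_trans (leq_b1 _)).
Qed.

Lemma root_cubicQ (L : fieldExtType rat) (g : L) :
  root (map_poly (in_alg L) cubicQ) g -> g ^+ 3 + 15 * g ^+ 2 + 24 * g + 19 = 0.
Proof.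
rewrite /root map_Poly horner_Poly /= scale1r !scaler_nat => /eqP <-.
ring.
Qed.

Lemma root_quadraticQ (L : fieldExtType rat) (w : L) :
  root (map_poly (in_alg L) quadraticQ) w -> 977 * w ^+ 2 = 15888.
Proof.
rewrite /root /quadraticQ rmorphB rmorphMn rmorph_nat /= map_polyXn -polyC_natr.
by rewrite hornerD hornerN hornerMn hornerXn hornerC subr_eq0 mulr_natl => /eqP.
Qed.

Record alg_point := AlgPoint {
  residue_field : fieldExtType rat;
  px : residue_field; py : residue_field; pz : residue_field; pt : residue_field }.

Definition on_S0 (P : alg_point) := onS0 (px P) (py P) (pz P) (pt P).
Definition pdeg (P : alg_point) := cpdeg (px P) (py P) (pz P) (pt P).

Definition zero_cycle_deg1 : Prop :=
  exists (n : nat) (L : 'I_n -> fieldExtType rat)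
         (x y z t : forall i : 'I_n, L i) (m : 'I_n -> int),
    (forall i, onS0 (x i) (y i) (z i) (t i)) /\
    \sum_(i < n) m i * (cpdeg (x i) (y i) (z i) (t i))%:Z = 1.

Lemma zero_cycle_deg1_of_coprime (P Q : alg_point) :
  on_S0 P -> on_S0 Q -> coprime (pdeg P) (pdeg Q) -> zero_cycle_deg1.
Proof.
move=> SP SQ /(coprimezP (pdeg P) (pdeg Q))[[u v] /= uv1].
pose pts (i : 'I_2) := if i == ord0 then P else Q.
exists 2%N, (fun i => residue_field (pts i)), (fun i => px (pts i)),
  (fun i => py (pts i)), (fun i => pz (pts i)), (fun i => pt (pts i)),
  (fun i => if i == ord0 then u else v).
split; first by move=> i; rewrite /pts; case: (i == ord0).
by rewrite big_ord_recr big_ord1.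
Qed.

Theorem mainTheorem1 :
  exists (n : nat) (L : 'I_n -> fieldExtType rat)
         (x y z t : forall i : 'I_n, L i) (m : 'I_n -> int),
    (forall i, onS0 (x i) (y i) (z i) (t i)) /\
    \sum_(i < n) m i * (cpdeg (x i) (y i) (z i) (t i))%:Z = 1.
Proof.
have odd_split a b : odd (a + b)%N -> odd a || odd b.
  by rewrite oddD; case: (odd a).
have le2_split a b : (a + b <= 2)%N -> (a <= 2)%N || (b <= 2)%N.
  by move=> /(leq_trans (leq_addr b a)) ->.
have := @ext_root_deg _ _ odd_split cubicQ; rewrite size_cubicQ.
move=> /(_ isT isT)[L1 [g [/root_cubicQ g_root odd_L1]]].
have := @ext_root_deg _ _ le2_split quadraticQ; rewrite size_quadraticQ.
move=> /(_ isT isT)[L2 [w [/root_quadraticQ w_root le2_L2]]].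
pose P1 := AlgPoint (cubic_x g) (cubic_y g) (cubic_z g) (cubic_t g).
pose P2 := @AlgPoint L2 (31 / 4) w 4 (- 7).
apply: (@zero_cycle_deg1_of_coprime P1 P2).
- exact: cubic_point_onS0 (pchar_fieldExt_rat L1) g_root.
- exact: quadratic_point_onS0 (pchar_fieldExt_rat L2) w_root.
have odd_P1 : odd (pdeg P1) := dvdn_odd (cpdeg_dvdn_dim _ _ _ _) odd_L1.
have dim_L2_dvd2 : (\dim {:L2} %| 2)%N.
  by move: le2_L2 (adim_gt0 {:L2}%AS); case: (\dim _) => [|[|[|]]].
have P2_dvd2 : (pdeg P2 %| 2)%N := dvdn_trans (cpdeg_dvdn_dim _ _ _ _) dim_L2_dvd2.
by apply: coprime_dvdr P2_dvd2 _; rewrite coprimen2.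
Qed.
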